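(* Let $s,d,t$ be positive integers with $s-dt>0$, $\mathbb{F}$ a field, $\mathcal{C}$ a linear code over $\mathbb{F}$ of rate $(s-dt)/s$, and $\mathcal{L}$ a labeling of its coordinates by $[s]$ with $\Delta_{\mathcal{L}}(\mathcal{C})\ge dt+1$. Then there is a positive integer $j$ such that: (i) $\mathcal{C}$ has length $n=js$ and dimension $j(s-dt)$; (ii) $|\mathcal{L}^{-1}(\lambda)|=j$ for all $\lambda\in[s]$; (iii) after a suitable reordering of the coordinates of $\mathcal{C}$, $\mathcal{L}:[js]\to[s]$ is given by $\mathcal{L}(x)=\lceil x/j\rceil$.
   Context: A labeling is a surjection $\mathcal{L}:[n]\to[s]$, and $\mathcal{L}^{-1}(\lambda)=\{i:\mathcal{L}(i)=\lambda\}$. Labelweight: for $\mathbf{c}\in\mathbb{F}^n$, $\Delta_{\mathcal{L}}(\mathbf{c})=|\{\mathcal{L}(i): c_i\neq0\}|$; for a code $\mathcal{C}$, $\Delta_{\mathcal{L}}(\mathcal{C})=\min_{\mathbf{0}\ne\mathbf{c}\in\mathcal{C}}\Delta_{\mathcal{L}}(\mathbf{c})$. Rate of a linear code of dimension $k$ in $\mathbb{F}^n$ is $k/n$. *)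

From HB Require Import structures.
From mathcomp Require Import all_boot all_order all_algebra all_fingroup.
Set Implicit Arguments. Unset Strict Implicit. Unset Printing Implicit Defensive.
Import GRing.Theory.
Local Open Scope ring_scope.

(* A labeling of the coordinates [n] (0-indexed as 'I_n) by [s] (as 'I_s). *)
Definition is_labeling (n s : nat) (L : 'I_n -> 'I_s) : Prop :=
  forall l : 'I_s, exists i : 'I_n, L i = l.

Definition labelweight (F : fieldType) (n s : nat) (L : 'I_n -> 'I_s)
  (c : 'rV[F]_n) : nat :=
  #|[set L i | i in [set i : 'I_n | c 0 i != 0]]|.

Definition labelweight_ge (F : fieldType) (n s : nat) (L : 'I_n -> 'I_s)
  (C : {vspace 'rV[F]_n}) (w : nat) : Prop :=
  forall c : 'rV[F]_n, c \in C -> c != 0 -> (w <= labelweight L c)%N.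

From HB Require Import structures.
From mathcomp Require Import all_boot all_order all_algebra all_fingroup.
Set Implicit Arguments. Unset Strict Implicit. Unset Printing Implicit Defensive.
Import GRing.Theory Num.Theory.

(* Let a_l be the number of coordinates with label l and r = dt. Puncturing C
   on the coordinates carrying any r labels is injective (a nonzero codeword
   has more than r labels), so any r labels carry at most n - dim C coordinates,
   while the rate hypothesis says that n - dim C = r n / s is the average.
   Hence, for any cyclic order of the labels, each of the s windows of r
   consecutive labels carries exactly n - dim C coordinates; two consecutive
   windows differ only in their first and last labels, which can be chosen
   arbitrarily, so all a_l equal some j. Sorting the coordinates by label
   then gives the labeling x |-> x / j. *)

Lemma exists_perm_map2 (T : finType) (i i' l l' : T) :
  i != i' -> l != l' -> exists p : {perm T}, p i = l /\ p i' = l'.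
Proof.
move=> ii' ll'; set x := tperm i l l'.
have xi : x != i.
  by apply: contraNneq ll' => xE; rewrite -(tpermK i l l') -/x xE tpermL.
exists (tperm i' x * tperm i l)%g; rewrite !permM tpermL tpermK.
by rewrite [tperm i' x i]tpermD ?tpermL // eq_sym.
Qed.

Lemma sum_leq_const_eq (I : finType) (N : nat) (g : I -> nat) :
  (forall i, g i <= N) -> \sum_i g i = #|I| * N -> forall i, g i = N.
Proof.
move=> le_gN sum_g i.
have : \sum_i (N - g i) + \sum_i g i = \sum_(i : I) N.
  by rewrite -big_split /=; apply: eq_bigr => k _; rewrite subnK.
rewrite sum_g sum_nat_const -[RHS]add0n => /addIn /eqP.
rewrite sum_nat_eq0 => /forallP/(_ i); rewrite subn_eq0 => le_Ng.
by apply/eqP; rewrite eqn_leq le_gN.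
Qed.

Section CyclicWindows.

Variables (s r N : nat) (a : 'I_s -> nat).
Hypotheses (s_gt0 : 0 < s) (r_gt0 : 0 < r) (r_lt_s : r < s).
Hypothesis window_bound : forall S : {set 'I_s}, #|S| <= r -> \sum_(l in S) a l <= N.
Hypothesis window_mean : s * N = r * \sum_l a l.

Let cyc (f : 'I_s -> 'I_s) (m : nat) := f (Ordinal (ltn_pmod m s_gt0)).

Lemma window_sum_eq f : injective f ->
  forall i : 'I_s, \sum_(j < r) a (cyc f (i + j)) = N.
Proof.
move=> f_inj.
have window_inj (i : 'I_s) : injective (fun j : 'I_r => cyc f (i + j)).
  move=> j j' /f_inj [] /eqP; rewrite eqn_modDl !modn_small ?(ltn_trans (ltn_ord _)) //.
  by move=> /eqP /val_inj.
have shift_inj j : injective (fun i : 'I_s => cyc f (i + j)).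
  by move=> i i' /f_inj [] /eqP; rewrite eqn_modDr !modn_small // => /eqP /val_inj.
apply: sum_leq_const_eq => [i|].
  rewrite -(big_imset _ (in2W (window_inj i))) /=; apply: window_bound.
  by apply: leq_trans (leq_imset_card _ _) _; rewrite card_ord.
rewrite card_ord window_mean exchange_big /= -[r in RHS]card_ord -sum_nat_const.
by apply: eq_bigr => j _; rewrite [RHS](reindex_inj (shift_inj j)).
Qed.

Lemma count_shift_eq f : injective f -> a (cyc f 0) = a (cyc f r).
Proof.
move=> f_inj; have s_gt1 : 1 < s by apply: leq_ltn_trans r_lt_s.
have := window_sum_eq f_inj (Ordinal s_gt0).
have := window_sum_eq f_inj (Ordinal s_gt1).
case: r r_gt0 => // r' _ /=.
rewrite big_ord_recr big_ord_recl /= add1n => <- /eqP.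
rewrite (eq_bigr (fun i : 'I_r' => a (cyc f (1 + i)))) // addnC eqn_add2l.
by move=> /eqP.
Qed.

Lemma counts_eq l l' : a l = a l'.
Proof.
have [-> // | ll'] := eqVneq l l'.
have o0r : Ordinal (ltn_pmod 0 s_gt0) != Ordinal (ltn_pmod r s_gt0).
  by rewrite -val_eqE /= mod0n modn_small // eq_sym -lt0n.
have [p [p0 pr]] := exists_perm_map2 o0r ll'.
by have := count_shift_eq (@perm_inj _ p); rewrite /cyc p0 pr.
Qed.

End CyclicWindows.

Lemma card_preimset_sum (aT rT : finType) (f : aT -> rT) (S : {set rT}) :
  #|f @^-1: S| = \sum_(l in S) #|[set x | f x == l]|.
Proof.
rewrite -sum1_card (partition_big f (mem S)) => [|x]; last by rewrite inE.
apply: eq_bigr => l lS; rewrite -sum1_card; apply: eq_bigl => x.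
by rewrite !inE; case: eqP => [->|]; rewrite ?andbF ?andbT.
Qed.

Lemma sum_card_fibers (aT rT : finType) (f : aT -> rT) :
  \sum_l #|[set x | f x == l]| = #|aT|.
Proof.
rewrite (eq_bigl (mem [set: rT])) => [|l]; last exact: esym (in_setT l).
by rewrite -card_preimset_sum preimsetT cardsT.
Qed.

Section SingletonBound.

Variables (F : fieldType) (n : nat).
Local Open Scope ring_scope.

Definition restrict_compl (T : {set 'I_n}) (c : 'rV[F]_n) :
  {ffun {i : 'I_n | i \notin T} -> F^o} := [ffun u => c 0 (val u)].

Lemma restrict_compl_is_linear T : linear (restrict_compl T).
Proof. by move=> a u v; apply/ffunP=> i; rewrite !ffunE !mxE. Qed.

HB.instance Definition _ T :=
  GRing.isLinear.Build _ _ _ _ (restrict_compl T) (restrict_compl_is_linear T).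

Lemma dimv_leq_card_compl (C : {vspace 'rV[F]_n}) (T : {set 'I_n}) :
  (forall c, c \in C -> (forall i, i \notin T -> c 0 i = 0) -> c = 0) ->
  (\dim C <= #|~: T|)%N.
Proof.
move=> vanish_off_T; pose f := linfun (restrict_compl T).
have : (C :&: lker f = 0)%VS.
  apply/eqP; rewrite -subv0; apply/subvP=> c; rewrite memv_cap memv_ker memv0.
  case/andP=> cC /eqP fc0; apply/eqP/vanish_off_T => // i iT.
  have := congr1 (fun g : {ffun _ -> F^o} => g (exist _ i iT)) fc0.
  by rewrite lfunE /= !ffunE.
move/limg_dim_eq <-; apply: leq_trans (dimvS (subvf _)) _.
rewrite dimvf /dim /= card_sig muln1; apply: subset_leq_card.
by apply/subsetP=> i; rewrite !inE.
Qed.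

Lemma labelweight_dimv_bound s (L : 'I_n -> 'I_s) (C : {vspace 'rV[F]_n}) w
    (S : {set 'I_s}) :
  labelweight_ge L C w -> (#|S| < w)%N -> (\dim C <= #|~: (L @^-1: S)|)%N.
Proof.
move=> C_lw S_small; apply: dimv_leq_card_compl => c cC c_off.
apply/eqP; apply: contraTT S_small => c_neq0; rewrite -leqNgt.
apply: leq_trans (C_lw c cC c_neq0) _; apply: subset_leq_card.
apply/subsetP=> l /imsetP[i]; rewrite inE => ci ->.
by apply: contraR ci => LiS; rewrite c_off ?inE ?eqxx.
Qed.

Lemma labelweight_fibers_bound s (L : 'I_n -> 'I_s) (C : {vspace 'rV[F]_n}) w
    (S : {set 'I_s}) :
  labelweight_ge L C w.+1 -> (#|S| <= w)%N ->
  (\sum_(l in S) #|[set i | L i == l]| <= n - \dim C)%N.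
Proof.
move=> C_lw S_le_w; have := labelweight_dimv_bound C_lw (S_le_w : (#|S| < w.+1)%N).
rewrite -card_preimset_sum => dim_le.
by rewrite -[n in (n - _)%N](card_ord n) -(cardsC (L @^-1: S)) -addnBA // leq_addr.
Qed.

End SingletonBound.

Lemma rate_eq_nat (R : numFieldType) (k n s m : nat) : 0 < s -> 0 < m ->
  (k%:R / n%:R = m%:R / s%:R :> R)%R -> 0 < n /\ k * s = m * n.
Proof.
move=> s_gt0 m_gt0 rate.
have n_gt0 : 0 < n.
  case: n rate => // /esym/eqP; rewrite invr0 mulr0 mulf_eq0 invr_eq0.
  by rewrite !pnatr_eq0 !eqn0Ngt s_gt0 m_gt0.
split=> //; apply/eqP; rewrite -(eqr_nat R) !natrM; apply/eqP.
have nz x : 0 < x -> (x%:R : R)%R != 0%R by rewrite pnatr_eq0 -lt0n.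
move: rate => /(congr1 (fun y => y * n%:R * s%:R)%R).
by rewrite mulfVK ?nz // -mulrA (mulrC n%:R%R) mulrA mulfVK ?nz.
Qed.

Lemma equal_fibers_sort_perm n s j (L : 'I_n -> 'I_s) :
  0 < j -> n = j * s -> (forall l, #|[set i | L i == l]| = j) ->
  exists sigma : 'S_n, forall x, nat_of_ord (L (sigma x)) = x %/ j.
Proof.
move=> j_gt0 nE fiber_j.
have block_lt (x : 'I_n) : x %/ j < s by rewrite ltn_divLR // mulnC -nE.
pose block x := Ordinal (block_lt x).
pose fiber x := enum [set i | L i == block x].
have size_fiber x : size (fiber x) = j by rewrite -cardE fiber_j.
have mod_lt (x : 'I_n) : x %% j < size (fiber x) by rewrite size_fiber ltn_mod.
pose g (x : 'I_n) := nth x (fiber x) (x %% j).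
have L_g (x : 'I_n) : L (g x) = block x.
  by have := mem_nth x (mod_lt x); rewrite mem_enum inE => /eqP.
have g_inj : injective g.
  move=> x y gxy; have block_xy : block x = block y by rewrite -L_g gxy L_g.
  have fiber_xy : fiber x = fiber y by rewrite /fiber block_xy.
  move: gxy; rewrite /g (set_nth_default y _ (mod_lt x)) fiber_xy => /eqP.
  rewrite nth_uniq ?enum_uniq ?size_fiber ?ltn_mod // => /eqP mod_xy.
  apply: val_inj; rewrite /= (divn_eq x j) (divn_eq y j) mod_xy.
  by have /= -> := congr1 val block_xy.
by exists (perm g_inj) => x; rewrite permE L_g.
Qed.

Theorem mainTheorem4 (s d t : nat) (F : fieldType) (n : nat)
  (C : {vspace 'rV[F]_n}) (L : 'I_n -> 'I_s) :
  (0 < s)%N -> (0 < d)%N -> (0 < t)%N -> (0 < s - d * t)%N ->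
  ((\dim C)%:R / n%:R = (s - d * t)%:R / s%:R :> rat)%R ->
  is_labeling L ->
  labelweight_ge L C (d * t).+1 ->
  exists j : nat, [/\ (0 < j)%N,
    n = (j * s)%N /\ \dim C = (j * (s - d * t))%N,
    (forall l : 'I_s, #|[set i : 'I_n | L i == l]| = j) &
    exists sigma : 'S_n, forall x : 'I_n, nat_of_ord (L (sigma x)) = (x %/ j)%N].
Proof.
move=> s_gt0 d_gt0 t_gt0 sr_gt0 rate L_onto C_lw.
have [_ dim_rate] := rate_eq_nat s_gt0 sr_gt0 rate.
set r := d * t in sr_gt0 dim_rate C_lw *.
have r_gt0 : 0 < r by rewrite muln_gt0 d_gt0 t_gt0.
have r_lt_s : r < s by rewrite -subn_gt0.
pose a l := #|[set i : 'I_n | L i == l]|.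
have sum_a : \sum_l a l = n by rewrite sum_card_fibers card_ord.
have window := labelweight_fibers_bound C_lw.
have mean : s * (n - \dim C) = r * \sum_l a l.
  by rewrite sum_a mulnBr [s * \dim C]mulnC dim_rate -mulnBl subKn // ltnW.
pose j := a (Ordinal s_gt0).
have a_j l : a l = j := counts_eq s_gt0 r_gt0 r_lt_s window mean l _.
have nE : n = j * s.
  by rewrite -sum_a (eq_bigr (fun=> j)) // sum_nat_const card_ord mulnC.
have j_gt0 : 0 < j.
  by have [i Li] := L_onto (Ordinal s_gt0); apply/card_gt0P; exists i; rewrite inE Li.
exists j; split=> //; last exact: equal_fibers_sort_perm.
split=> //; apply/eqP; rewrite -(eqn_pmul2r s_gt0) dim_rate nE.
by rewrite mulnA (mulnC (s - r)).
Qed.
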